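(* Let $h\in(0,1)$, $\rho>0$, $z\in L^2(\Gamma)$, and let $\tau,\theta>0$ satisfy $\big(\frac1\tau-\frac{c_\gamma^2}{c_1^2}\big)\frac\theta\tau>\rho^2\|\nabla\|^2$. On $X=\mathcal{V}^h_1\times(\mathcal{V}^h_0)^d$ with inner product $((f,p),(g,q)):=(f,g)_\Omega+(p,q)_\Omega$ define the linear operator $$B(f,p):=\Big(\tfrac1\tau f-\overline{u^h_a}(f)+\rho\,\mathrm{div}_h p,\ -\rho\nabla f+\tfrac\theta\tau p\Big)$$ and the map $A(f,p):=\big(u^h_a(f)-\rho\,\mathrm{div}_h p,\ -\rho\nabla f\big)$. Then $B$ is symmetric and positive definite on $X$. Moreover, if $\mu_n=(f^h_n,p^h_n)$ and $\mu_{n+1}=(f^h_{n+1},p^h_{n+1})$ are consecutive iterates of the scheme $$f^h_{n+1}=\arg\min_{f\in F^h_{ad}}\Big\{(f,u^h_a(f^h_n))_\Omega+\rho(\nabla f,p^h_n)_\Omega+\tfrac1{2\tau}\|f-f^h_n\|^2_\Omega\Big\},\quad \widetilde f^h_{n+1}=2f^h_{n+1}-f^h_n,$$ $$p^h_{n+1}=\arg\max_{p\in(\mathcal{V}^h_0)^d}\Big\{\rho(\nabla\widetilde f^h_{n+1},p)_\Omega-I_{\mathcal{B}_1}(p)-\tfrac\theta{2\tau}\|p-p^h_n\|^2_\Omega\Big\}$$ (with $f^h_n\in F^h_{ad}$, $p^h_n\in(\mathcal{V}^h_0)^d$), then $$\big(A(\mu_{n+1})+B(\mu_{n+1}-\mu_n),\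 \nu-\mu_{n+1}\big)\ge0\quad\text{for all }\nu\in F^h_{ad}\times\mathcal{B}_1.$$
   Context: Let $\Omega\subset\mathbb{R}^d$, $d\ge2$, be open bounded connected with polygonal boundary, $\Gamma\subset\partial\Omega$ relatively open. Let $\alpha\in L^\infty(\Omega)^{d\times d}$ be symmetric with $\alpha(x)\xi\cdot\xi\ge\underline\alpha|\xi|^2$ a.e. ($\underline\alpha>0$), $\beta\in L^\infty(\Omega)$, $\beta\ge0$, $\sigma\in L^\infty(\partial\Omega)$, $\sigma\ge0$, with $\beta\ge\beta_0>0$ a.e. in $\Omega$ or $\sigma\ge\sigma_0>0$ a.e. on $\partial\Omega$; $j\in H^{-1/2}(\partial\Omega)$; $a(u,v)=(\alpha\nabla u,\nabla v)_\Omega+(\beta u,v)_\Omega+(\sigma u,v)_{\partial\Omega}$ with $L^2$ inner products $(\cdot,\cdot)_\Omega,(\cdot,\cdot)_{\partial\Omega},(\cdot,\cdot)_\Gamma$. $c_1>0$ satisfies $c_1\|u\|^2_{H^1(\Omega)}\le a(u,u)$ for all $u\in H^1(\Omega)$; $c_\gamma>0$ satisfies $\|u\|_{L^2(\partial\Omega)}\le c_\gamma\|u\|_{H^1(\Omega)}$ for all $u\in H^1(\Omega)$. $\mathcal{T}^h$ is a regular triangulation of $\overline\Omega$ (boundary vertices are nodes); $\mathcal{V}^h_1$ continuous piecewise linear, $\mathcal{V}^h_0$ piecewise constant functions. For $f\in L^2(\Omega)$: $u^h(f)\in\mathcal{V}^h_1$ solves $a(u^h(f),v)=(f,v)_\Omega+\langle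 j,v\rangle$ $\forall v\in\mathcal{V}^h_1$; $u^h_a(f)\in\mathcal{V}^h_1$ solves $a(u^h_a(f),v)=(u^h(f)-z,v)_\Gamma$ $\forall v\in\mathcal{V}^h_1$; $\overline{u^h}(f)\in\mathcal{V}^h_1$ solves $a(\overline{u^h}(f),v)=(f,v)_\Omega$ $\forall v\in\mathcal{V}^h_1$; $\overline{u^h_a}(f)\in\mathcal{V}^h_1$ solves $a(\overline{u^h_a}(f),v)=(\overline{u^h}(f),v)_\Gamma$ $\forall v\in\mathcal{V}^h_1$. For $p\in(\mathcal{V}^h_0)^d$, $\mathrm{div}_h p\in\mathcal{V}^h_1$ is defined by $(\mathrm{div}_h p,g)_\Omega=-(p,\nabla g)_\Omega$ for all $g\in\mathcal{V}^h_1$. $\|\nabla\|=\sup_{0\ne v\in\mathcal{V}^h_1}\|\nabla v\|_\Omega/\|v\|_\Omega$. $F_{ad}=\{f\in BV(\Omega):\underline f\le f\le\overline f\text{ a.e.}\}$ for given constants, $F^h_{ad}=F_{ad}\cap\mathcal{V}^h_1$; $\mathcal{B}_1=\{p=(p_j)\in(\mathcal{V}^h_0)^d:\max_j\|p_j\|_{L^\infty}\le1\}$ and $I_{\mathcal{B}_1}$ its indicator function. *)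

From HB Require Import structures.
From mathcomp Require Import all_boot all_order all_algebra.
From mathcomp Require Import boolp classical_sets reals constructive_ereal.
Set Implicit Arguments. Unset Strict Implicit. Unset Printing Implicit Defensive.
Import Order.TTheory GRing.Theory Num.Theory.
Local Open Scope ring_scope.
Local Open Scope classical_set_scope.

(* Finite element model:
   - V1 = V_1^h is represented by nodal coefficient vectors 'rV[R]_n
     (n = number of nodes of the triangulation);
   - (V_0^h)^d is represented by 'M[R]_(ne, d): p T j = value of the
     j-th component p_j on element T (ne = number of elements);
   - vol T > 0 is the volume of element T;
   - Dphi i T j = j-th partial derivative of the i-th nodal basis function
     on element T (a constant);
   - L^2 type bilinear forms on V1 are given by their (Gram) matrices. *)

Section FE.
Context {R : realType} {n ne d : nat}.

Definition bil (M : 'M[R]_n) (u v : 'rV[R]_n) : R := (u *m M *m v^T) 0 0.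

Definition lfun (w u : 'rV[R]_n) : R := (u *m w^T) 0 0.

Definition ipP (vol : 'I_ne -> R) (p q : 'M[R]_(ne, d)) : R :=
  \sum_(T < ne) vol T * \sum_(j < d) p T j * q T j.

Definition gradh (Dphi : 'I_n -> 'I_ne -> 'I_d -> R) (f : 'rV[R]_n)
  : 'M[R]_(ne, d) := \matrix_(T < ne, j < d) \sum_(i < n) f 0 i * Dphi i T j.

Definition H1sq (MO : 'M[R]_n) (vol : 'I_ne -> R) Dphi (u : 'rV[R]_n) : R :=
  bil MO u u + ipP vol (gradh Dphi u) (gradh Dphi u).

Definition gradnorm (MO : 'M[R]_n) (vol : 'I_ne -> R) Dphi : R :=
  sup [set Num.sqrt (ipP vol (gradh Dphi v) (gradh Dphi v))
             / Num.sqrt (bil MO v v) | v in [set v : 'rV[R]_n | v != 0]].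

Definition Fadh (flo fhi : R) : set 'rV[R]_n :=
  [set f | forall i, flo <= f 0 i <= fhi].

Definition B1 : set 'M[R]_(ne, d) :=
  [set p | forall T j, `|p T j| <= 1].

Definition IB1 (p : 'M[R]_(ne, d)) : \bar R :=
  if `[< B1 p >] then 0%E else +oo%E.

Definition ipX (MO : 'M[R]_n) (vol : 'I_ne -> R)
  (mu nu : 'rV[R]_n * 'M[R]_(ne, d)) : R :=
  bil MO mu.1 nu.1 + ipP vol mu.2 nu.2.

Definition Bop (tau theta rho : R) (uba : 'rV[R]_n -> 'rV[R]_n)
  (divh : 'M[R]_(ne, d) -> 'rV[R]_n) Dphi
  (mu : 'rV[R]_n * 'M[R]_(ne, d)) : 'rV[R]_n * 'M[R]_(ne, d) :=
  (tau^-1 *: mu.1 - uba mu.1 + rho *: divh mu.2,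
   - (rho *: gradh Dphi mu.1) + (theta / tau) *: mu.2).

Definition Aop (rho : R) (uha : 'rV[R]_n -> 'rV[R]_n)
  (divh : 'M[R]_(ne, d) -> 'rV[R]_n) Dphi
  (mu : 'rV[R]_n * 'M[R]_(ne, d)) : 'rV[R]_n * 'M[R]_(ne, d) :=
  (uha mu.1 - rho *: divh mu.2, - (rho *: gradh Dphi mu.1)).

Definition Jf (MO : 'M[R]_n) vol Dphi (uha : 'rV[R]_n -> 'rV[R]_n)
  (rho tau : R) (fn : 'rV[R]_n) (pn : 'M[R]_(ne, d)) (f : 'rV[R]_n) : R :=
  bil MO f (uha fn) + rho * ipP vol (gradh Dphi f) pn
  + (2 * tau)^-1 * bil MO (f - fn) (f - fn).

Definition Jp vol Dphi (rho tau theta : R) (ftil : 'rV[R]_n)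
  (pn p : 'M[R]_(ne, d)) : \bar R :=
  ((rho * ipP vol (gradh Dphi ftil) p
    - theta / (2 * tau) * ipP vol (p - pn) (p - pn))%:E - IB1 p)%E.

End FE.

(* The first component of B is symmetric because the adjoint state map f |-> u_a(f)-bar
   has the Gram form (u-bar(f), u-bar(g))_Gamma, and the off-diagonal blocks are
   rho div_h and -rho grad, which are adjoint up to sign.  For positivity, coercivity of
   a(.,.) and the trace inequality give ||u-bar(f)||_Gamma <= (c_gamma / c_1) ||f||, and
   (grad f, p) <= ||grad|| ||f|| ||p||, so (B mu, mu) dominates a binary quadratic form in
   (||f||, ||p||) which the step-size condition makes positive definite.
   Each step of the scheme minimises a linear functional plus a multiple of a squared
   distance over a convex set; comparing the minimiser with points on the segment towards
   any admissible competitor yields a first-order variational inequality.  Since u_a is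
   affine with linear part the adjoint state map, the sum of the two inequalities is
   exactly (A mu_{n+1} + B (mu_{n+1} - mu_n), nu - mu_{n+1}) >= 0. *)

From HB Require Import structures.
From mathcomp Require Import all_boot all_order all_algebra.
From mathcomp Require Import boolp classical_sets reals constructive_ereal.
From mathcomp Require Import ring lra.
Set Implicit Arguments. Unset Strict Implicit. Unset Printing Implicit Defensive.
Import Order.TTheory GRing.Theory Num.Theory.
Local Open Scope ring_scope.
Local Open Scope classical_set_scope.

Section RealQuadratics.
Variable R : realFieldType.

Lemma sqr_gt0 (x : R) : x != 0 -> 0 < x ^+ 2.
Proof. by move=> x0; rewrite lt_def sqr_ge0 sqrf_eq0 x0. Qed.

Lemma linear_coef_ge0 (a b : R) :
  (forall t, 0 < t <= 1 -> 0 <= t * a + t ^+ 2 * b) -> 0 <= a.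
Proof.
move=> hab; rewrite leNgt; apply/negP => a_lt0.
(* t := -a / (2|b| - a) lies in (0, 1] and makes a + t b <= a / 2 < 0 *)
have b_ge0 := normr_ge0 b.
have D_gt0 : 0 < 2 * `|b| - a by lra.
pose t := - a / (2 * `|b| - a).
have tD : t * (2 * `|b| - a) = - a by rewrite /t mulfVK ?gt_eqF.
have t_gt0 : 0 < t by rewrite divr_gt0 ?oppr_gt0.
have t_le1 : t <= 1 by rewrite ler_pdivrMr //; lra.
have tb : t * b <= t * `|b| by apply: ler_wpM2l; [exact: ltW | exact: ler_norm].
have := hab t; rewrite t_gt0 t_le1 => /(_ isT).
have -> : t * a + t ^+ 2 * b = t * (a + t * b) by ring.
rewrite pmulr_rge0 // => h.
have ta : t * a < 0 by rewrite pmulr_rlt0.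
nra.
Qed.

Lemma quadratic_form_gt0 (a b k X Y : R) :
  0 < b -> k ^+ 2 < a * b -> X != 0 \/ Y != 0 ->
  0 < a * X ^+ 2 - 2 * k * X * Y + b * Y ^+ 2.
Proof.
move=> b_gt0 kab XY.
have a_gt0 : 0 < a.
  by rewrite -(pmulr_lgt0 _ b_gt0); apply: le_lt_trans kab; exact: sqr_ge0.
rewrite -(pmulr_rgt0 _ a_gt0).
have -> : a * (a * X ^+ 2 - 2 * k * X * Y + b * Y ^+ 2)
  = (a * X - k * Y) ^+ 2 + (a * b - k ^+ 2) * Y ^+ 2 by ring.
have [Y0 | Y0] := eqVneq Y 0.
  have X0 : X != 0 by case: XY; rewrite // Y0 eqxx.
  by rewrite Y0 mulr0 subr0 expr0n mulr0 addr0 sqr_gt0 // mulf_neq0 // gt_eqF.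
by rewrite ltr_wpDl ?sqr_ge0 // mulr_gt0 ?subr_gt0 ?sqr_gt0.
Qed.

End RealQuadratics.

Section SymmetricForm.
Variables (R : realFieldType) (V : lmodType R) (B : V -> V -> R).
Hypotheses (formC : forall x y, B x y = B y x)
  (formDl : forall x y z, B (x + y) z = B x z + B y z)
  (formZl : forall a x y, B (a *: x) y = a * B x y).

Lemma formDr x y z : B x (y + z) = B x y + B x z.
Proof. by rewrite formC formDl !(formC x). Qed.

Lemma formZr a x y : B x (a *: y) = a * B x y.
Proof. by rewrite formC formZl formC. Qed.

Lemma form_lincombE s t x y :
  B (s *: x + t *: y) (s *: x + t *: y)
  = s ^+ 2 * B x x + 2 * s * t * B x y + t ^+ 2 * B y y.
Proof. rewrite !(formDl, formDr, formZl, formZr) (formC y x); ring. Qed.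

Lemma form_min_first_order (S : set V) (l : V -> R) (c : R) x0 x1 y :
  (forall x y, l (x + y) = l x + l y) -> (forall a x, l (a *: x) = a * l x) ->
  (forall t, 0 <= t <= 1 -> S (x1 + t *: (y - x1))) ->
  (forall x, S x -> l x1 + c * B (x1 - x0) (x1 - x0) <= l x + c * B (x - x0) (x - x0)) ->
  0 <= l (y - x1) + 2 * c * B (x1 - x0) (y - x1).
Proof.
move=> lD lZ Sseg x1_min; apply: (@linear_coef_ge0 _ _ (c * B (y - x1) (y - x1))).
move=> t /andP[t_gt0 t_le1].
have := x1_min _ (Sseg t _); rewrite ltW ?t_le1 // => /(_ isT).
have -> : x1 + t *: (y - x1) - x0 = (x1 - x0) + t *: (y - x1) by rewrite addrAC.
move: (y - x1) (x1 - x0) => w u.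
rewrite lD lZ !(formDl, formDr, formZl, formZr) (formC w u) -subr_ge0 => h.
lra.
Qed.

Hypothesis form_ge0 : forall x, 0 <= B x x.

Lemma form_cauchy_schwarz x y : B x y ^+ 2 <= B x x * B y y.
Proof.
have [Bx By] := (form_ge0 x, form_ge0 y).
have [By0 | By0] := eqVneq (B y y) 0.
  (* on an isotropic y, B x y must vanish, otherwise B(x + t y) < 0 for a suitable t *)
  have [-> | Bxy0] := eqVneq (B x y) 0; first by rewrite By0 expr0n mulr0.
  have := form_ge0 (1 *: x + (- (B x x + 1) / (2 * B x y)) *: y).
  rewrite form_lincombE By0.
  have -> : 2 * 1 * (- (B x x + 1) / (2 * B x y)) * B x y = - (B x x + 1) by field.
  lra.
have By_gt0 : 0 < B y y by rewrite lt_def By0.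
have := form_ge0 (B y y *: x + (- B x y) *: y); rewrite form_lincombE => h.
have : 0 <= B y y * (B x x * B y y - B x y ^+ 2) by nra.
by rewrite pmulr_rge0 // subr_ge0.
Qed.

End SymmetricForm.

Lemma form_le_sqrt (R : rcfType) (V : lmodType R) (B : V -> V -> R) :
  (forall x y, B x y = B y x) -> (forall x y z, B (x + y) z = B x z + B y z) ->
  (forall a x y, B (a *: x) y = a * B x y) -> (forall x, 0 <= B x x) ->
  forall x y, B x y <= Num.sqrt (B x x) * Num.sqrt (B y y).
Proof.
move=> BC BDl BZl B_ge0 x y; rewrite -sqrtrM ?B_ge0 //.
apply: le_trans (ler_norm _) _; rewrite -sqrtr_sqr ler_sqrt ?mulr_ge0 ?B_ge0 //.
exact: form_cauchy_schwarz.
Qed.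

Section FiniteElementForms.
Variables (R : realType) (n ne d : nat).
Implicit Types (M : 'M[R]_n) (u v w : 'rV[R]_n) (p q r : 'M[R]_(ne, d))
  (Dphi : 'I_n -> 'I_ne -> 'I_d -> R).

Lemma bilDl M u v w : bil M (u + v) w = bil M u w + bil M v w.
Proof. by rewrite /bil !mulmxDl mxE. Qed.

Lemma bilZl M a u w : bil M (a *: u) w = a * bil M u w.
Proof. by rewrite /bil -!scalemxAl mxE. Qed.

Lemma bilNl M u w : bil M (- u) w = - bil M u w.
Proof. by rewrite -scaleN1r bilZl mulN1r. Qed.

Lemma bilC M u v : M^T = M -> bil M u v = bil M v u.
Proof.
have trmx11 (A : 'M[R]_1) : A 0 0 = A^T 0 0 by rewrite mxE.
by move=> MT; rewrite /bil trmx11 !trmx_mul trmxK MT mulmxA.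
Qed.

Lemma bil0l M u : bil M 0 u = 0.
Proof. by rewrite /bil !mul0mx mxE. Qed.

Lemma ipPDl vol p q r : ipP vol (p + q) r = ipP vol p r + ipP vol q r.
Proof.
rewrite /ipP -big_split; apply: eq_bigr => T _ /=; rewrite -mulrDr -big_split.
by congr (_ * _); apply: eq_bigr => j _; rewrite mxE mulrDl.
Qed.

Lemma ipPZl vol a p r : ipP vol (a *: p) r = a * ipP vol p r.
Proof.
rewrite /ipP mulr_sumr; apply: eq_bigr => T _; rewrite [RHS]mulrCA [in RHS]mulr_sumr.
by congr (_ * _); apply: eq_bigr => j _; rewrite mxE mulrA.
Qed.

Lemma ipPC vol p q : ipP vol p q = ipP vol q p.
Proof. by apply: eq_bigr => T _; congr (_ * _); apply: eq_bigr => j _; rewrite mulrC. Qed.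

Lemma ipPNl vol p r : ipP vol (- p) r = - ipP vol p r.
Proof. by rewrite -scaleN1r ipPZl mulN1r. Qed.

Lemma ipPDr vol p q r : ipP vol r (p + q) = ipP vol r p + ipP vol r q.
Proof. by rewrite ipPC ipPDl !(ipPC _ r). Qed.

Lemma ipPZr vol a p r : ipP vol r (a *: p) = a * ipP vol r p.
Proof. by rewrite ipPC ipPZl ipPC. Qed.

Lemma ipP_ge0 vol p : (forall T, 0 <= vol T) -> 0 <= ipP vol p p.
Proof.
move=> vol_ge0; apply: sumr_ge0 => T _; rewrite mulr_ge0 //.
by apply: sumr_ge0 => j _; rewrite -expr2 sqr_ge0.
Qed.

Lemma ipP_gt0 vol p : (forall T, 0 < vol T) -> p != 0 -> 0 < ipP vol p p.
Proof.
move=> vol_gt0 p0; rewrite lt_def ipP_ge0 => [|T]; last exact: ltW.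
rewrite andbT; apply: contra p0 => /eqP ipP0; apply/eqP/matrixP => T j.
have term_ge0 S k : 0 <= p S k * p S k by rewrite -expr2 sqr_ge0.
have row_ge0 S : 0 <= vol S * \sum_(k < d) p S k * p S k.
  by rewrite mulr_ge0 ?sumr_ge0 ?ltW.
have /eqP := psumr_eq0P (fun S _ => row_ge0 S) ipP0 (i := T) isT.
rewrite mulf_eq0 gt_eqF //= => /eqP rowT0.
have /eqP := psumr_eq0P (fun k _ => term_ge0 T k) rowT0 (i := j) isT.
by rewrite mulf_eq0 orbb mxE => /eqP.
Qed.

Lemma gradhD Dphi u v : gradh Dphi (u + v) = gradh Dphi u + gradh Dphi v :> 'M[R]_(ne, d).
Proof.
by apply/matrixP => T j; rewrite !mxE -big_split; apply: eq_bigr => i _; rewrite mxE mulrDl.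
Qed.

Lemma gradhZ Dphi a u : gradh Dphi (a *: u) = a *: gradh Dphi u :> 'M[R]_(ne, d).
Proof.
by apply/matrixP => T j; rewrite !mxE mulr_sumr; apply: eq_bigr => i _; rewrite mxE mulrA.
Qed.

Lemma gradhN Dphi u : gradh Dphi (- u) = - gradh Dphi u :> 'M[R]_(ne, d).
Proof. by rewrite -scaleN1r gradhZ scaleN1r. Qed.

Lemma gradhE Dphi u T j : gradh Dphi u T j = (u *m \col_i Dphi i T j) 0 0.
Proof. by rewrite !mxE; apply: eq_bigr => i _; rewrite mxE. Qed.

End FiniteElementForms.

Lemma Fadh_segment (R : realType) (n : nat) (flo fhi t : R) (f g : 'rV[R]_n) :
  Fadh flo fhi f -> Fadh flo fhi g -> 0 <= t <= 1 -> Fadh flo fhi (f + t *: (g - f)).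
Proof.
move=> hf hg /andP[t_ge0 t_le1] i; rewrite !mxE.
by move: (hf i) (hg i) => /andP[? ?] /andP[? ?]; apply/andP; split; nra.
Qed.

Lemma B1_segment (R : realType) (ne d : nat) (t : R) (p q : 'M[R]_(ne, d)) :
  B1 p -> B1 q -> 0 <= t <= 1 -> B1 (p + t *: (q - p)).
Proof.
move=> hp hq /andP[t_ge0 t_le1] T j; rewrite !mxE.
move: (hp T j) (hq T j); rewrite !ler_norml => /andP[? ?] /andP[? ?].
by apply/andP; split; nra.
Qed.

Section DiscreteGradient.
Variables (R : realType) (n ne d : nat) (MO : 'M[R]_n) (vol : 'I_ne -> R)
  (Dphi : 'I_n -> 'I_ne -> 'I_d -> R).
Hypotheses (vol_ge0 : forall T, 0 <= vol T)
  (MO_sym : MO^T = MO) (MO_pos : forall u, u != 0 -> 0 < bil MO u u).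

Lemma bilMO_ge0 u : 0 <= bil MO u u.
Proof. by have [->|/MO_pos/ltW//] := eqVneq u 0; rewrite bil0l. Qed.

Lemma bilMO_le_sqrt u v : bil MO u v <= Num.sqrt (bil MO u u) * Num.sqrt (bil MO v v).
Proof.
exact: form_le_sqrt (fun u v => bilC u v MO_sym) (@bilDl _ _ _) (@bilZl _ _ _) bilMO_ge0 u v.
Qed.

Lemma MO_unitmx : MO \in unitmx.
Proof.
rewrite -row_free_unit; apply: inj_row_free => v v0; apply/eqP; apply: contraT => /MO_pos.
by rewrite /bil v0 mul0mx mxE ltxx.
Qed.

Lemma col_bilE (c : 'cV[R]_n) u : (u *m c) 0 0 = bil MO u (invmx MO *m c)^T.
Proof. by rewrite /bil trmxK !mulmxA -(mulmxA u) mulmxV ?mulmx1 // MO_unitmx. Qed.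

Lemma gradh_bounded : exists2 C, 0 <= C &
  forall v, ipP vol (gradh Dphi v) (gradh Dphi v) <= C * bil MO v v.
Proof.
pose w T j := (invmx MO *m \col_i Dphi i T j)^T.
exists (\sum_T vol T * \sum_j bil MO (w T j) (w T j)).
  by apply: sumr_ge0 => T _; rewrite mulr_ge0 ?sumr_ge0 // => j _; exact: bilMO_ge0.
move=> v; rewrite /ipP mulr_suml; apply: ler_sum => T _; rewrite -mulrA ler_wpM2l //.
rewrite mulr_suml; apply: ler_sum => j _; rewrite gradhE col_bilE -expr2 mulrC.
exact: form_cauchy_schwarz (fun u v => bilC u v MO_sym)
  (@bilDl _ _ _) (@bilZl _ _ _) bilMO_ge0 _ _.
Qed.

Lemma gradh_le_gradnorm v :
  Num.sqrt (ipP vol (gradh Dphi v) (gradh Dphi v))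
  <= gradnorm MO vol Dphi * Num.sqrt (bil MO v v).
Proof.
have [C C_ge0 gradC] := gradh_bounded.
have [v0 | v_neq0] := eqVneq v 0.
  have := gradC v; rewrite v0 bil0l mulr0 sqrtr0 mulr0 => /ler0_sqrtr->.
  exact: lexx.
rewrite -ler_pdivrMr ?sqrtr_gt0 ?MO_pos //; apply: ub_le_sup; last by exists v.
exists (Num.sqrt C) => _ [u /MO_pos u_pos <-].
by rewrite ler_pdivrMr ?sqrtr_gt0 // -sqrtrM // ler_sqrt ?mulr_ge0 // ltW.
Qed.

End DiscreteGradient.

Section AdjointStates.
Variables (R : realType) (n : nat) (MO Ka MG : 'M[R]_n) (jv zv : 'rV[R]_n)
  (uh uha ub uba : 'rV[R]_n -> 'rV[R]_n).
Hypotheses (MO_sym : MO^T = MO) (Ka_sym : Ka^T = Ka) (MG_sym : MG^T = MG)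
  (huh : forall f v, bil Ka (uh f) v = bil MO f v + lfun jv v)
  (huha : forall f v, bil Ka (uha f) v = bil MG (uh f) v - lfun zv v)
  (hub : forall f v, bil Ka (ub f) v = bil MO f v)
  (huba : forall f v, bil Ka (uba f) v = bil MG (ub f) v).

Lemma bil_uba f g : bil MO (uba f) g = bil MG (ub f) (ub g).
Proof. by rewrite bilC // -hub bilC // huba. Qed.

Lemma bil_ubaC f g : bil MO (uba f) g = bil MO f (uba g).
Proof. by rewrite bil_uba bilC // -bil_uba bilC. Qed.

Lemma bil_uha f w : bil MO (uha f) w = bil MO f (uba w) + lfun jv (uba w) - lfun zv (ub w).
Proof. by rewrite bilC // -hub bilC // huha bilC // -huba bilC // huh. Qed.

Lemma bil_uhaB f g w : bil MO (uha f) w = bil MO (uha g) w + bil MO (uba (f - g)) w.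
Proof. by rewrite !bil_uha bil_ubaC bilDl bilNl; ring. Qed.

End AdjointStates.

Section TraceEstimate.
Variables (R : realType) (n ne d : nat) (vol : 'I_ne -> R)
  (Dphi : 'I_n -> 'I_ne -> 'I_d -> R) (MO Ka MB MG : 'M[R]_n) (c1 cg : R)
  (ub : 'rV[R]_n -> 'rV[R]_n).
Hypotheses (vol_ge0 : forall T, 0 <= vol T)
  (MO_sym : MO^T = MO) (MO_pos : forall u, u != 0 -> 0 < bil MO u u)
  (MG_ge0 : forall u, 0 <= bil MG u u) (MG_le_MB : forall u, bil MG u u <= bil MB u u)
  (c1_gt0 : 0 < c1) (cg_gt0 : 0 < cg)
  (coercive : forall u, c1 * H1sq MO vol Dphi u <= bil Ka u u)
  (trace_ineq : forall u, Num.sqrt (bil MB u u) <= cg * Num.sqrt (H1sq MO vol Dphi u))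
  (hub : forall f v, bil Ka (ub f) v = bil MO f v).

Lemma ub_trace_le f : bil MG (ub f) (ub f) <= cg ^+ 2 / c1 ^+ 2 * bil MO f f.
Proof.
set u := ub f.
have H1_ge : bil MO u u <= H1sq MO vol Dphi u by rewrite /H1sq lerDl ipP_ge0.
have H1_ge0 := le_trans (bilMO_ge0 MO_pos u) H1_ge.
set S := Num.sqrt (H1sq MO vol Dphi u); set F := Num.sqrt (bil MO f f).
have [S_ge0 F_ge0] : 0 <= S /\ 0 <= F by split; exact: sqrtr_ge0.
have energy : c1 * S ^+ 2 <= F * S.
  rewrite sqr_sqrtr //; apply: le_trans (coercive u) _; rewrite hub.
  apply: le_trans (bilMO_le_sqrt MO_sym MO_pos f u) _.
  by rewrite ler_wpM2l // ler_sqrt.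
have c1S : c1 * S <= F.
  have [S0 | S_neq0] := eqVneq S 0; first by rewrite S0 mulr0.
  have S_gt0 : 0 < S by rewrite lt_def S_neq0.
  by rewrite -(ler_pM2r S_gt0) -mulrA -expr2.
have MB_ge0 := le_trans (MG_ge0 u) (MG_le_MB u).
have MB_le : c1 * Num.sqrt (bil MB u u) <= cg * F.
  apply: le_trans (_ : c1 * (cg * S) <= _); first by rewrite ler_pM2l // trace_ineq.
  by rewrite mulrCA ler_pM2l.
apply: le_trans (MG_le_MB u) _; rewrite mulrAC ler_pdivlMr ?exprn_gt0 //.
rewrite -(sqr_sqrtr MB_ge0) -(sqr_sqrtr (bilMO_ge0 MO_pos f)) -/F.
rewrite mulrC -!exprMn lerXn2r // nnegrE mulr_ge0 ?sqrtr_ge0 ?ltW //.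
Qed.

End TraceEstimate.

Lemma ipXC (R : realType) (n ne d : nat) (MO : 'M[R]_n) (vol : 'I_ne -> R)
  (mu nu : 'rV[R]_n * 'M[R]_(ne, d)) :
  MO^T = MO -> ipX MO vol mu nu = ipX MO vol nu mu.
Proof. by move=> MO_sym; rewrite /ipX bilC // ipPC. Qed.

Section SaddlePointOperators.
Variables (R : realType) (n ne d : nat) (vol : 'I_ne -> R)
  (Dphi : 'I_n -> 'I_ne -> 'I_d -> R) (MO Ka MG : 'M[R]_n)
  (ub uba : 'rV[R]_n -> 'rV[R]_n) (divh : 'M[R]_(ne, d) -> 'rV[R]_n)
  (rho tau theta : R).
Hypotheses (MO_sym : MO^T = MO) (Ka_sym : Ka^T = Ka) (MG_sym : MG^T = MG)
  (hub : forall f v, bil Ka (ub f) v = bil MO f v)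
  (huba : forall f v, bil Ka (uba f) v = bil MG (ub f) v)
  (hdiv : forall p g, bil MO (divh p) g = - ipP vol p (gradh Dphi g)).

Local Notation B := (Bop tau theta rho uba divh Dphi).

Lemma ipX_BopE mu nu : ipX MO vol (B mu) nu
  = tau^-1 * bil MO mu.1 nu.1 - bil MG (ub mu.1) (ub nu.1)
    - rho * ipP vol mu.2 (gradh Dphi nu.1) - rho * ipP vol (gradh Dphi mu.1) nu.2
    + theta / tau * ipP vol mu.2 nu.2.
Proof.
rewrite /ipX /Bop /=.
rewrite !(bilDl, bilNl, bilZl, ipPDl, ipPNl, ipPZl) (bil_uba MO_sym Ka_sym hub huba) hdiv.
ring.
Qed.

Lemma Bop_sym mu nu : ipX MO vol (B mu) nu = ipX MO vol mu (B nu).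
Proof.
rewrite [RHS]ipXC // !ipX_BopE bilC // (bilC _ _ MG_sym).
rewrite (ipPC _ nu.2 mu.2) (ipPC _ nu.2) (ipPC _ mu.2).
ring.
Qed.

Variables (MB : 'M[R]_n) (c1 cg : R).
Hypotheses (vol_gt0 : forall T, 0 < vol T) (MO_pos : forall u, u != 0 -> 0 < bil MO u u)
  (MG_ge0 : forall u, 0 <= bil MG u u) (MG_le_MB : forall u, bil MG u u <= bil MB u u)
  (c1_gt0 : 0 < c1) (cg_gt0 : 0 < cg)
  (coercive : forall u, c1 * H1sq MO vol Dphi u <= bil Ka u u)
  (trace_ineq : forall u, Num.sqrt (bil MB u u) <= cg * Num.sqrt (H1sq MO vol Dphi u))
  (rho_gt0 : 0 < rho) (tau_gt0 : 0 < tau) (theta_gt0 : 0 < theta)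
  (cfl : rho ^+ 2 * gradnorm MO vol Dphi ^+ 2
         < (tau^-1 - cg ^+ 2 / c1 ^+ 2) * (theta / tau)).

Lemma Bop_pos mu : mu != (0, 0) -> 0 < ipX MO vol (B mu) mu.
Proof.
case: mu => f p mu0; rewrite ipX_BopE /= (ipPC _ p).
have vol_ge0 T : 0 <= vol T by exact: ltW.
set G := gradnorm MO vol Dphi.
set X := Num.sqrt (bil MO f f); set Y := Num.sqrt (ipP vol p p).
have [X_ge0 Y_ge0] : 0 <= X /\ 0 <= Y by split; exact: sqrtr_ge0.
have XY : X != 0 \/ Y != 0.
  move: mu0; rewrite xpair_eqE negb_and => /orP[f0 | p0]; [left | right].
    by rewrite sqrtr_eq0 -ltNge MO_pos.
  by rewrite sqrtr_eq0 -ltNge ipP_gt0.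
have cross : ipP vol (gradh Dphi f) p <= G * X * Y.
  apply: le_trans (form_le_sqrt (ipPC vol) (ipPDl vol) (ipPZl vol)
    (fun q => ipP_ge0 q vol_ge0) _ _) _.
  by apply: ler_wpM2r; [exact: sqrtr_ge0 | exact: gradh_le_gradnorm].
have ub_bound := ub_trace_le vol_ge0 MO_sym MO_pos MG_ge0 MG_le_MB c1_gt0 cg_gt0
  coercive trace_ineq hub f.
have := quadratic_form_gt0 (divr_gt0 theta_gt0 tau_gt0) _ XY.
move=> /(_ (tau^-1 - cg ^+ 2 / c1 ^+ 2) (rho * G)); rewrite exprMn => /(_ cfl).
rewrite !sqr_sqrtr ?ipP_ge0 ?bilMO_ge0 // in ub_bound *.
have := ler_wpM2l (ltW rho_gt0) cross; lra.
Qed.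

End SaddlePointOperators.

Section SchemeOptimality.
Variables (R : realType) (n ne d : nat) (vol : 'I_ne -> R)
  (Dphi : 'I_n -> 'I_ne -> 'I_d -> R) (MO Ka MG : 'M[R]_n) (jv zv : 'rV[R]_n)
  (uh uha ub uba : 'rV[R]_n -> 'rV[R]_n) (divh : 'M[R]_(ne, d) -> 'rV[R]_n)
  (rho tau theta : R).
Hypotheses (MO_sym : MO^T = MO) (Ka_sym : Ka^T = Ka) (MG_sym : MG^T = MG)
  (huh : forall f v, bil Ka (uh f) v = bil MO f v + lfun jv v)
  (huha : forall f v, bil Ka (uha f) v = bil MG (uh f) v - lfun zv v)
  (hub : forall f v, bil Ka (ub f) v = bil MO f v)
  (huba : forall f v, bil Ka (uba f) v = bil MG (ub f) v)
  (hdiv : forall p g, bil MO (divh p) g = - ipP vol p (gradh Dphi g))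
  (tau_gt0 : 0 < tau).

Lemma ipX_Aop_BopE f1 fn p1 pn nu :
  ipX MO vol (Aop rho uha divh Dphi (f1, p1)
              + Bop tau theta rho uba divh Dphi (f1 - fn, p1 - pn)) nu
  = (bil MO nu.1 (uha fn) + rho * ipP vol (gradh Dphi nu.1) pn
     + tau^-1 * bil MO (f1 - fn) nu.1)
    + (theta / tau * ipP vol (p1 - pn) nu.2
       - rho * ipP vol (gradh Dphi (2 *: f1 - fn)) nu.2).
Proof.
case: nu => g q; rewrite /ipX /Aop /Bop /=.
rewrite !(bilDl, bilNl, bilZl) (bil_uhaB MO_sym Ka_sym MG_sym huh huha hub huba f1 fn).
rewrite (bilC g) // !hdiv !(gradhD, gradhN, gradhZ).
rewrite !(ipPDl, ipPNl, ipPZl) (ipPC _ (gradh Dphi g)).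
ring.
Qed.

Lemma Jf_first_order flo fhi fn pn f1 g :
  Fadh flo fhi f1 -> Fadh flo fhi g ->
  (forall f, Fadh flo fhi f ->
     Jf MO vol Dphi uha rho tau fn pn f1 <= Jf MO vol Dphi uha rho tau fn pn f) ->
  0 <= bil MO (g - f1) (uha fn) + rho * ipP vol (gradh Dphi (g - f1)) pn
       + tau^-1 * bil MO (f1 - fn) (g - f1).
Proof.
move=> hf1 hg f1_min.
pose l f := bil MO f (uha fn) + rho * ipP vol (gradh Dphi f) pn.
have -> : tau^-1 = 2 * (2 * tau)^-1 by field; rewrite gt_eqF.
apply: (@form_min_first_order _ _ (bil MO) (fun u v => bilC u v MO_sym)
  (@bilDl _ _ MO) (@bilZl _ _ MO) (Fadh flo fhi) l _ fn f1 g).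
- by move=> u v; rewrite /l bilDl gradhD ipPDl; ring.
- by move=> a u; rewrite /l bilZl gradhZ ipPZl; ring.
- by move=> t t01; apply: Fadh_segment.
- exact: f1_min.
Qed.

Lemma Jp_B1 ft pn p : B1 p ->
  Jp vol Dphi rho tau theta ft pn p
  = (rho * ipP vol (gradh Dphi ft) p - theta / (2 * tau) * ipP vol (p - pn) (p - pn))%:E.
Proof. by move=> pB; rewrite /Jp /IB1 asboolT // sube0. Qed.

Lemma B1_of_Jp_argmax ft pn p1 :
  (forall p, (Jp vol Dphi rho tau theta ft pn p <= Jp vol Dphi rho tau theta ft pn p1)%E) ->
  B1 p1.
Proof.
move=> p1_max; apply: contrapT => p1_notB.
have B1_0 : B1 (0 : 'M[R]_(ne, d)) by move=> T j; rewrite mxE normr0.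
by have := p1_max 0; rewrite Jp_B1 // /Jp /IB1 asboolF.
Qed.

Lemma Jp_first_order ft pn p1 q : B1 q ->
  (forall p, (Jp vol Dphi rho tau theta ft pn p <= Jp vol Dphi rho tau theta ft pn p1)%E) ->
  0 <= theta / tau * ipP vol (p1 - pn) (q - p1) - rho * ipP vol (gradh Dphi ft) (q - p1).
Proof.
move=> hq p1_max; have p1B := B1_of_Jp_argmax p1_max.
pose l p := - (rho * ipP vol (gradh Dphi ft) p).
have -> : theta / tau = 2 * (theta / (2 * tau)) by field; rewrite gt_eqF.
rewrite addrC; apply: (@form_min_first_order _ _ (ipP vol) (ipPC vol) (ipPDl vol) (ipPZl vol)
  B1 l _ pn p1 q).
- by move=> u v; rewrite /l ipPDr; ring.
- by move=> a u; rewrite /l ipPZr; ring.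
- by move=> t t01; apply: B1_segment.
- by move=> p pB; have := p1_max p; rewrite !Jp_B1 // lee_fin /l; lra.
Qed.

End SchemeOptimality.

Theorem lemma4p8 (R : realType) (n ne d : nat) (hd : (2 <= d)%N)
  (* geometry of the discrete spaces *)
  (vol : 'I_ne -> R) (hvol : forall T, 0 < vol T)
  (Dphi : 'I_n -> 'I_ne -> 'I_d -> R)
  (* Gram matrices: (.,.)_Omega, a(.,.), (.,.)_{dOmega}, (.,.)_Gamma on V1 *)
  (MO Ka MB MG : 'M[R]_n)
  (hMOsym : MO^T = MO) (hMOpos : forall u : 'rV[R]_n, u != 0 -> 0 < bil MO u u)
  (hKsym : Ka^T = Ka) (hMBsym : MB^T = MB) (hMGsym : MG^T = MG)
  (hMG0 : forall u, 0 <= bil MG u u)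
  (hMGB : forall u, bil MG u u <= bil MB u u)
  (c1 cg : R) (hc1 : 0 < c1) (hcg : 0 < cg)
  (hcoer : forall u, c1 * H1sq MO vol Dphi u <= bil Ka u u)
  (htrace : forall u, Num.sqrt (bil MB u u) <= cg * Num.sqrt (H1sq MO vol Dphi u))
  (* data: j (as functional on V1), z (via v |-> (z, v)_Gamma), bounds *)
  (jv zv : 'rV[R]_n) (flo fhi : R)
  (* discrete state / adjoint solution operators *)
  (uh uha ub uba : 'rV[R]_n -> 'rV[R]_n)
  (huh : forall f v, bil Ka (uh f) v = bil MO f v + lfun jv v)
  (huha : forall f v, bil Ka (uha f) v = bil MG (uh f) v - lfun zv v)
  (hub : forall f v, bil Ka (ub f) v = bil MO f v)
  (huba : forall f v, bil Ka (uba f) v = bil MG (ub f) v)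
  (* discrete divergence *)
  (divh : 'M[R]_(ne, d) -> 'rV[R]_n)
  (hdiv : forall p g, bil MO (divh p) g = - ipP vol p (gradh Dphi g))
  (h rho tau theta : R) (hh : 0 < h < 1) (hrho : 0 < rho)
  (htau : 0 < tau) (htheta : 0 < theta)
  (hcond : rho ^+ 2 * gradnorm MO vol Dphi ^+ 2
           < (tau^-1 - cg ^+ 2 / c1 ^+ 2) * (theta / tau)) :
  ((forall mu nu, ipX MO vol (Bop tau theta rho uba divh Dphi mu) nu
                  = ipX MO vol mu (Bop tau theta rho uba divh Dphi nu))
   /\ (forall mu, mu != (0, 0) -> 0 < ipX MO vol (Bop tau theta rho uba divh Dphi mu) mu))
  /\
  (forall (fn f1 : 'rV[R]_n) (pn p1 : 'M[R]_(ne, d)),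
     Fadh flo fhi fn ->
     Fadh flo fhi f1 ->
     (forall f, Fadh flo fhi f ->
        Jf MO vol Dphi uha rho tau fn pn f1 <= Jf MO vol Dphi uha rho tau fn pn f) ->
     (forall p, (Jp vol Dphi rho tau theta (2 *: f1 - fn) pn p
                 <= Jp vol Dphi rho tau theta (2 *: f1 - fn) pn p1)%E) ->
     forall nu, Fadh flo fhi nu.1 -> B1 nu.2 ->
       0 <= ipX MO vol
              (Aop rho uha divh Dphi (f1, p1)
               + Bop tau theta rho uba divh Dphi (f1 - fn, p1 - pn))
              (nu - (f1, p1))).
Proof.
split.
  split; first exact: Bop_sym _ _ _ hMOsym hKsym hMGsym hub huba hdiv.
  exact: (Bop_pos hMOsym hKsym hub huba hdiv hvol hMOpos hMG0 hMGB
    hc1 hcg hcoer htrace hrho htau htheta hcond).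
move=> fn f1 pn p1 _ hf1 f1_min p1_max nu hg hq.
rewrite (ipX_Aop_BopE _ _ _ hMOsym hKsym hMGsym huh huha hub huba hdiv) /=.
apply: addr_ge0; first exact: (Jf_first_order hMOsym htau hf1 hg f1_min).
exact: (Jp_first_order htau hq p1_max).
Qed.
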